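(* Let $X$ be a compact metric space whose metric $d$ is an ultrametric, i.e. $d(x,z)\le\max\{d(x,y),d(y,z)\}$ for all $x,y,z\in X$. If a continuous map $f\colon X\to X$ has the contractive shadowing property, then $CR(f)=\overline{Per(f)}$.
   Context: For $\delta>0$, a sequence $(x_i)_{i\ge0}$ is a $\delta$-pseudo orbit of $f$ if $d(f(x_i),x_{i+1})\le\delta$ for all $i\ge0$; it is $\epsilon$-shadowed by $x$ if $d(f^i(x),x_i)\le\epsilon$ for all $i\ge0$. $f$ has the contractive shadowing property if there are $0<L<1$ and $\delta_0>0$ such that for every $0<\delta\le\delta_0$, every $\delta$-pseudo orbit of $f$ is $L\delta$-shadowed by some point of $X$. A $\delta$-chain is a finite sequence $(x_i)_{i=0}^k$, $k\ge1$, with $d(f(x_i),x_{i+1})\le\delta$ for $0\le i\le k-1$; a $\delta$-cycle is a $\delta$-chain with $x_0=x_k$. $CR(f)$ is the set of $x\in X$ such that for every $\delta>0$ there is a $\delta$-cycle with $x_0=x_k=x$. $Per(f)=\bigcup_{i>0}\{x: f^i(x)=x\}$. *)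

From Stdlib Require Import Reals List.
Open Scope R_scope.

Record is_metric {X : Type} (d : X -> X -> R) : Prop := {
  metric_nonneg : forall x y, 0 <= d x y;
  metric_eq0 : forall x y, d x y = 0 <-> x = y;
  metric_sym : forall x y, d x y = d y x;
  metric_triangle : forall x y z, d x z <= d x y + d y z }.

Definition is_ultrametric {X : Type} (d : X -> X -> R) : Prop :=
  forall x y z, d x z <= Rmax (d x y) (d y z).

Definition m_open {X : Type} (d : X -> X -> R) (U : X -> Prop) : Prop :=
  forall x, U x -> exists r, 0 < r /\ forall y, d x y < r -> U y.

Definition m_compact {X : Type} (d : X -> X -> R) : Prop :=
  forall (I : Type) (U : I -> X -> Prop),
    (forall i, m_open d (U i)) ->
    (forall x, exists i, U i x) ->
    exists l : list I, forall x, exists i, In i l /\ U i x.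

Definition m_continuous {X : Type} (d : X -> X -> R) (f : X -> X) : Prop :=
  forall x eps, 0 < eps -> exists del, 0 < del /\
    forall y, d x y < del -> d (f x) (f y) < eps.

Definition pseudo_orbit {X : Type} (d : X -> X -> R) (f : X -> X)
  (delta : R) (xs : nat -> X) : Prop :=
  forall i, d (f (xs i)) (xs (S i)) <= delta.

Definition shadowed {X : Type} (d : X -> X -> R) (f : X -> X)
  (eps : R) (xs : nat -> X) (x : X) : Prop :=
  forall i, d (Nat.iter i f x) (xs i) <= eps.

Definition contractive_shadowing {X : Type} (d : X -> X -> R) (f : X -> X) : Prop :=
  exists L delta0, 0 < L /\ L < 1 /\ 0 < delta0 /\
    forall delta, 0 < delta -> delta <= delta0 ->
      forall xs, pseudo_orbit d f delta xs ->
        exists x, shadowed d f (L * delta) xs x.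

(* a delta-chain (x_0,...,x_k), k >= 1, encoded by a sequence and its length k *)
Definition delta_chain {X : Type} (d : X -> X -> R) (f : X -> X)
  (delta : R) (xs : nat -> X) (k : nat) : Prop :=
  (1 <= k)%nat /\ forall i, (i < k)%nat -> d (f (xs i)) (xs (S i)) <= delta.

Definition chain_recurrent {X : Type} (d : X -> X -> R) (f : X -> X) (x : X) : Prop :=
  forall delta, 0 < delta -> exists xs k,
    delta_chain d f delta xs k /\ xs 0%nat = x /\ xs k = x.

Definition periodic {X : Type} (f : X -> X) (x : X) : Prop :=
  exists i, (0 < i)%nat /\ Nat.iter i f x = x.

Definition m_closure {X : Type} (d : X -> X -> R) (A : X -> Prop) (x : X) : Prop :=
  forall eps, 0 < eps -> exists y, A y /\ d x y < eps.

(* Closing a delta-cycle through x into a periodic delta-pseudo orbit and shadowing it gives a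
   point y with d(y, x) <= L delta and d(f^k y, y) <= L delta, by the ultrametric inequality.
   The orbit segment y, f y, ..., f^(k-1) y is itself a cycle whose only jump is the
   displacement d(f^k y, y); shadowing it moves the point by at most L times the displacement
   and multiplies the displacement by at most L. Ultrametricity keeps all these points in the
   closed ball of radius L delta around x, so the displacement has infimum 0 on that ball;
   being continuous, it vanishes somewhere on the compact ball, which yields a periodic point
   near x. The converse inclusion holds for every continuous map. *)
From Stdlib Require Import Reals Lra Lia List Classical.
Open Scope R_scope.

Definition displacement {X : Type} (d : X -> X -> R) (f : X -> X) (k : nat) (z : X) : R :=
  d (Nat.iter k f z) z.

Lemma cycle_succ_mod {A : Type} (a : nat -> A) (k i : nat) :
  k <> 0%nat -> a k = a 0%nat -> a (S i mod k) = a (S (i mod k)).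
Proof.
  intros Hk Hak.
  assert (Hs : (S i mod k = S (i mod k) mod k)%nat).
  { rewrite <- Nat.add_1_r, <- (Nat.add_1_r (i mod k)). now rewrite Nat.Div0.add_mod_idemp_l. }
  rewrite Hs. pose proof (Nat.mod_upper_bound i k Hk).
  destruct (Nat.eq_dec (S (i mod k)) k) as [E|E].
  - now rewrite E, Nat.Div0.mod_same, Hak.
  - rewrite Nat.mod_small; auto; lia.
Qed.

Section Metric.

Context {X : Type} (d : X -> X -> R).
Hypothesis Hm : is_metric d.

Lemma metric_refl (x : X) : d x x = 0.
Proof. now apply (metric_eq0 d Hm). Qed.

Lemma m_open_or (U V : X -> Prop) :
  m_open d U -> m_open d V -> m_open d (fun x => U x \/ V x).
Proof.
  intros HU HV x [Hx|Hx];
    [destruct (HU x Hx) as [r [Hr HUr]] | destruct (HV x Hx) as [r [Hr HVr]]];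
    exists r; split; auto.
Qed.

Lemma m_open_not_closed_ball (x : X) (r : R) : m_open d (fun z => ~ d z x <= r).
Proof.
  intros z Hz. exists (d z x - r). split; [lra|].
  intros w Hw Hwx. pose proof (metric_triangle d Hm z w x). lra.
Qed.

Lemma m_compact_pos_lower_bound (h : X -> R) (C : X -> Prop) :
  m_compact d ->
  (forall c, m_open d (fun z => c < h z)) ->
  m_open d (fun z => ~ C z) ->
  (forall z, C z -> 0 < h z) ->
  exists c, 0 < c /\ forall z, C z -> c <= h z.
Proof.
  intros Hcomp Hh HC Hpos.
  destruct (Hcomp nat (fun n z => ~ C z \/ / INR (S n) < h z)) as [l Hl].
  - intros n. now apply m_open_or.
  - intros z. destruct (classic (C z)) as [Hz|Hz]; [|exists 0%nat; now left].
    destruct (archimed_cor1 (h z) (Hpos z Hz)) as [n [Hn Hn0]].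
    exists (pred n). right. now replace (S (pred n)) with n by lia.
  - exists (/ INR (S (list_max l))). split; [apply Rinv_0_lt_compat, lt_0_INR; lia|].
    intros z Hz. destruct (Hl z) as [i [Hi [Hi'|Hi']]]; [contradiction|].
    assert (HiN : (i <= list_max l)%nat).
    { apply (proj1 (Forall_forall _ l) (proj1 (list_max_le l _) (le_n _))), Hi. }
    assert (/ INR (S (list_max l)) <= / INR (S i)).
    { apply Rinv_le_contravar; [apply lt_0_INR; lia | apply le_INR; lia]. }
    lra.
Qed.

Lemma m_continuous_iter (f : X -> X) (n : nat) :
  m_continuous d f -> m_continuous d (Nat.iter n f).
Proof.
  intros Hc; induction n as [|n IH]; intros x eps He.
  - exists eps; split; auto.
  - destruct (Hc (Nat.iter n f x) eps He) as [eta [Heta Hf]].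
    destruct (IH x eta Heta) as [del [Hdel Hn]].
    exists del; split; auto. intros y Hy. apply Hf, Hn, Hy.
Qed.

Lemma displacement_lower_open (f : X -> X) (k : nat) (c : R) :
  m_continuous d f -> m_open d (fun z => c < displacement d f k z).
Proof.
  unfold displacement. intros Hc z Hz.
  set (e := (d (Nat.iter k f z) z - c) / 2).
  destruct (m_continuous_iter f k Hc z e ltac:(unfold e; lra)) as [del [Hdel Hk]].
  exists (Rmin del e). split; [apply Rmin_glb_lt; unfold e; lra|].
  intros w Hw. pose proof (Rmin_l del e). pose proof (Rmin_r del e).
  specialize (Hk w ltac:(lra)).
  pose proof (metric_triangle d Hm (Nat.iter k f z) (Nat.iter k f w) z).
  pose proof (metric_triangle d Hm (Nat.iter k f w) w z).
  rewrite (metric_sym d Hm w z) in *. unfold e in *. lra.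
Qed.

Lemma orbit_delta_chain (f : X -> X) (k : nat) (z : X) : (1 <= k)%nat ->
  delta_chain d f (displacement d f k z) (fun i => if i =? k then z else Nat.iter i f z) k.
Proof.
  intros Hk. split; auto. intros i Hi.
  rewrite (proj2 (Nat.eqb_neq i k)) by lia.
  destruct (Nat.eqb_spec (S i) k) as [E|E].
  - unfold displacement. rewrite <- E. apply Rle_refl.
  - change (Nat.iter (S i) f z) with (f (Nat.iter i f z)).
    unfold displacement. rewrite metric_refl. apply metric_nonneg, Hm.
Qed.

Lemma periodic_closure_chain_recurrent (f : X -> X) (x : X) :
  m_continuous d f -> m_closure d (periodic f) x -> chain_recurrent d f x.
Proof.
  intros Hc Hcl delta Hd.
  destruct (Hc x (delta / 2) ltac:(lra)) as [eta [Heta Hfx]].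
  destruct (Hcl (Rmin eta (delta / 2)) ltac:(apply Rmin_glb_lt; lra))
    as [p [[n [Hn Hp]] Hxp]].
  pose proof (Rmin_l eta (delta / 2)). pose proof (Rmin_r eta (delta / 2)).
  set (xs := fun i => if i =? 0 then x else if i <? n then Nat.iter i f p else x).
  exists xs, n. split; [split; [lia|]|].
  - intros i Hi.
    assert (Hstart : d (f (xs i)) (Nat.iter (S i) f p) < delta / 2).
    { unfold xs. destruct (Nat.eqb_spec i 0) as [->|Hi0].
      - apply Hfx. lra.
      - rewrite (proj2 (Nat.ltb_lt i n) Hi), metric_refl. lra. }
    assert (Hend : d (Nat.iter (S i) f p) (xs (S i)) < delta / 2).
    { unfold xs. simpl Nat.eqb. destruct (Nat.ltb_spec (S i) n) as [Hlt|Hge].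
      - rewrite metric_refl. lra.
      - replace (S i) with n by lia. rewrite Hp, (metric_sym d Hm). lra. }
    pose proof (metric_triangle d Hm (f (xs i)) (Nat.iter (S i) f p) (xs (S i))). lra.
  - unfold xs. split; [reflexivity|].
    destruct (Nat.eqb_spec n 0); [lia|]. now rewrite Nat.ltb_irrefl.
Qed.

End Metric.

Section ContractiveShadowing.

Context {X : Type} (d : X -> X -> R) (f : X -> X).
Hypothesis Hm : is_metric d.
Hypothesis Hu : is_ultrametric d.
Variables L delta0 : R.
Hypothesis HL0 : 0 < L.
Hypothesis HL1 : L < 1.
Hypothesis Hshadow : forall delta, 0 < delta -> delta <= delta0 ->
  forall xs, pseudo_orbit d f delta xs -> exists x, shadowed d f (L * delta) xs x.

Lemma shadow_cycle (delta : R) (a : nat -> X) (k : nat) :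
  0 < delta -> delta <= delta0 -> delta_chain d f delta a k -> a k = a 0%nat ->
  exists y, d y (a 0%nat) <= L * delta /\ displacement d f k y <= L * delta.
Proof.
  intros Hd Hd0 [Hk Ha] Hcyc.
  assert (Hk0 : k <> 0%nat) by lia.
  destruct (Hshadow delta Hd Hd0 (fun i => a (i mod k))) as [y Hy].
  - intros i. cbv beta. rewrite (cycle_succ_mod a k i Hk0 Hcyc).
    apply Ha, Nat.mod_upper_bound, Hk0.
  - exists y. pose proof (Hy 0%nat) as Hy0. pose proof (Hy k) as Hyk. cbv beta in Hy0, Hyk.
    rewrite Nat.Div0.mod_0_l in Hy0. rewrite Nat.Div0.mod_same in Hyk.
    split; [exact Hy0|].
    unfold displacement. eapply Rle_trans; [apply (Hu _ (a 0%nat))|].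
    rewrite (metric_sym d Hm (a 0%nat) y). now apply Rmax_lub.
Qed.

Lemma displacement_contract (k : nat) (z : X) :
  (1 <= k)%nat -> displacement d f k z <= delta0 ->
  exists y, d y z <= L * displacement d f k z
         /\ displacement d f k y <= L * displacement d f k z.
Proof.
  intros Hk Hz.
  destruct (Rle_lt_or_eq_dec 0 _ (metric_nonneg d Hm (Nat.iter k f z) z)) as [Hpos|H0].
  - assert (Hz0 : (if 0 =? k then z else Nat.iter 0 f z) = z) by now destruct (0 =? k).
    assert (Hzk : (if k =? k then z else Nat.iter k f z) = z) by now rewrite Nat.eqb_refl.
    destruct (shadow_cycle _ _ k Hpos Hz (orbit_delta_chain d Hm f k z Hk))
      as [y Hy]; [congruence|].
    exists y. now rewrite Hz0 in Hy.
  - exists z. unfold displacement. rewrite <- H0, Rmult_0_r, (metric_refl d Hm).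
    split; apply Rle_refl.
Qed.

Lemma displacement_descent (k : nat) (x y0 : X) (r : R) :
  (1 <= k)%nat -> 0 <= r -> r <= delta0 ->
  d y0 x <= r -> displacement d f k y0 <= r ->
  forall n, exists z, d z x <= r /\ displacement d f k z <= L ^ n * r.
Proof.
  intros Hk Hr Hr0 Hy0 Hg0 n. induction n as [|n [z [Hzx Hz]]].
  - exists y0. simpl. lra.
  - assert (HLn : L ^ n <= 1) by (rewrite <- (pow1 n); apply pow_incr; lra).
    assert (Hzr : displacement d f k z <= r).
    { eapply Rle_trans; [exact Hz|]. rewrite <- (Rmult_1_l r) at 2.
      apply Rmult_le_compat_r; lra. }
    pose proof (metric_nonneg d Hm (Nat.iter k f z) z).
    destruct (displacement_contract k z Hk ltac:(lra)) as [y [Hyz Hy]].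
    exists y. split.
    + eapply Rle_trans; [apply (Hu y z x)|]. apply Rmax_lub; [|exact Hzx].
      unfold displacement in *. nra.
    + eapply Rle_trans; [exact Hy|]. simpl. rewrite Rmult_assoc.
      apply Rmult_le_compat_l; lra.
Qed.

Hypothesis Hcomp : m_compact d.
Hypothesis Hc : m_continuous d f.

Lemma displacement_vanishes_near (k : nat) (x y0 : X) (r : R) :
  (1 <= k)%nat -> 0 < r -> r <= delta0 ->
  d y0 x <= r -> displacement d f k y0 <= r ->
  exists z, d z x <= r /\ displacement d f k z = 0.
Proof.
  intros Hk Hr Hr0 Hy0 Hg0.
  apply NNPP; intros Hno.
  destruct (m_compact_pos_lower_bound d (displacement d f k) (fun z => d z x <= r) Hcomp
              (fun c => displacement_lower_open d Hm f k c Hc)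
              (m_open_not_closed_ball d Hm x r)) as [c [Hc0 Hlow]].
  { intros z Hz.
    destruct (Rle_lt_or_eq_dec 0 _ (metric_nonneg d Hm (Nat.iter k f z) z)) as [|E]; auto.
    exfalso. apply Hno. now exists z. }
  destruct (pow_lt_1_zero L ltac:(rewrite Rabs_right; lra) (c / r)) as [n Hn].
  { apply Rdiv_lt_0_compat; lra. }
  specialize (Hn n (le_n n)). rewrite Rabs_right in Hn by (apply Rle_ge, pow_le; lra).
  assert (Hsmall : L ^ n * r < c).
  { replace c with (c / r * r) by (field; lra). apply Rmult_lt_compat_r; lra. }
  destruct (displacement_descent k x y0 r Hk ltac:(lra) Hr0 Hy0 Hg0 n) as [z [Hzx Hz]].
  specialize (Hlow z Hzx). lra.
Qed.

Lemma chain_recurrent_periodic_closure (x : X) :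
  0 < delta0 -> chain_recurrent d f x -> m_closure d (periodic f) x.
Proof.
  intros Hd0 Hcr eps Heps.
  set (delta := Rmin delta0 (eps / 2)).
  assert (Hd : 0 < delta) by (apply Rmin_glb_lt; lra).
  pose proof (Rmin_l delta0 (eps / 2)). pose proof (Rmin_r delta0 (eps / 2)).
  destruct (Hcr delta Hd) as [a [k [Hch [Ha0 Hak]]]].
  destruct (shadow_cycle delta a k Hd ltac:(unfold delta; lra) Hch ltac:(congruence))
    as [y0 [Hy0 Hg0]].
  rewrite Ha0 in Hy0.
  destruct (displacement_vanishes_near k x y0 (L * delta) (proj1 Hch)
              ltac:(nra) ltac:(unfold delta in *; nra) Hy0 Hg0) as [z [Hzx Hz]].
  exists z. split.
  - exists k. split; [exact (proj1 Hch)|]. now apply (metric_eq0 d Hm).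
  - rewrite (metric_sym d Hm). unfold delta in *. nra.
Qed.

End ContractiveShadowing.

Theorem theorem1p5 (X : Type) (d : X -> X -> R) (f : X -> X) :
  is_metric d -> is_ultrametric d -> m_compact d -> m_continuous d f ->
  contractive_shadowing d f ->
  forall x, chain_recurrent d f x <-> m_closure d (periodic f) x.
Proof.
  intros Hm Hu Hcomp Hc [L [delta0 [HL0 [HL1 [Hd0 Hshadow]]]]] x. split.
  - exact (chain_recurrent_periodic_closure d f Hm Hu L delta0 HL0 HL1 Hshadow Hcomp Hc x Hd0).
  - exact (periodic_closure_chain_recurrent d Hm f x Hc).
Qed.
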